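(* Let $F\colon\mathbf{Ring}^{\mathrm{op}}\to\mathbf{Loc}$ be any functor whose restriction to commutative rings is naturally isomorphic to the Pierce spectrum functor. Then $F(R)$ is the trivial locale for every Kochen--Specker ring $R$; in particular $F(M_n(\mathbb{C}))$ is trivial for all $n\ge 3$.
   Context: $\mathbf{Ring}$ is the category of unital rings and unital ring homomorphisms; $\mathbf{Loc}$ is the category of locales. The Pierce spectrum of a commutative ring $R$ is the Stone spectrum of its boolean algebra $E(R)$ of idempotents, i.e. the locale whose frame is the ideal frame $\mathrm{Idl}(E(R))$. A locale is trivial if its frame satisfies $0=1$. A ring $R$ is Kochen--Specker if there is a ring homomorphism $M_n(\mathbb{C})\to R$ for some $n\ge 3$, where $M_n(\mathbb{C})$ is the ring of $n\times n$ complex matrices. *)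

From HB Require Import structures.
From mathcomp Require Import all_boot all_algebra.
From Stdlib Require Import Reals Lra ClassicalEpsilon FunctionalExtensionality.
Set Implicit Arguments. Unset Strict Implicit.
Unset Printing Implicit Defensive.
Import GRing.Theory.

Definition Rfind (P : pred R) (n : nat) : option R :=
  match excluded_middle_informative (exists x, P x) with
  | left _ => Some (epsilon (inhabits 0%R) (fun x => P x))
  | right _ => None end.
Lemma Rfind_correct P n x : Rfind P n = Some x -> P x.
Proof. rewrite /Rfind; case: excluded_middle_informative => // H [<-].
by apply: (epsilon_spec (inhabits 0%R) (fun x => P x)). Qed.
Lemma Rfind_complete (P : pred R) : (exists x, P x) -> exists n, Rfind P n.
Proof. move=> H; exists 0%N; rewrite /Rfind; case: excluded_middle_informative. by []. by []. Qed.
Lemma Rfind_ext (P Q : pred R) : P =1 Q -> Rfind P =1 Rfind Q.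
Proof. move=> H n; have -> // : P = Q by apply: functional_extensionality. Qed.
Lemma Req_axiom : Equality.axiom (fun x y : R => if Req_EM_T x y then true else false).
Proof. move=> x y; case: Req_EM_T => H; [by constructor | by constructor]. Qed.
HB.instance Definition _ := hasDecEq.Build R Req_axiom.
HB.instance Definition _ := hasChoice.Build R Rfind_correct Rfind_complete Rfind_ext.

Record Cplx := Cpx { cre : R ; cim : R }.
Definition Cplx_to (z : Cplx) : R * R := (cre z, cim z).
Definition Cplx_of (p : R * R) : Cplx := Cpx p.1 p.2.
Lemma Cplx_toK : cancel Cplx_to Cplx_of. Proof. by case. Qed.
HB.instance Definition _ := Choice.copy Cplx (can_type Cplx_toK).

Definition C0 := Cpx 0%R 0%R.
Definition Cadd z w := Cpx (cre z + cre w)%R (cim z + cim w)%R.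
Definition Copp z := Cpx (- cre z)%R (- cim z)%R.
Definition C1 := Cpx 1%R 0%R.
Definition Cmul z w := Cpx (cre z * cre w - cim z * cim w)%R (cre z * cim w + cim z * cre w)%R.

Lemma CaddA : associative Cadd.
Proof. by move=> [a b] [c d] [e f]; rewrite /Cadd /=; congr Cpx; ring. Qed.
Lemma CaddC : commutative Cadd.
Proof. by move=> [a b] [c d]; rewrite /Cadd /=; congr Cpx; ring. Qed.
Lemma Cadd0 : left_id C0 Cadd.
Proof. by move=> [a b]; rewrite /Cadd /=; congr Cpx; ring. Qed.
Lemma CaddN : left_inverse C0 Copp Cadd.
Proof. by move=> [a b]; rewrite /Cadd /=; congr Cpx; ring. Qed.
HB.instance Definition _ := GRing.isZmodule.Build Cplx CaddA CaddC Cadd0 CaddN.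
Lemma CmulA : associative Cmul.
Proof. by move=> [a b] [c d] [e f]; rewrite /Cmul /=; congr Cpx; ring. Qed.
Lemma CmulC : commutative Cmul.
Proof. by move=> [a b] [c d]; rewrite /Cmul /=; congr Cpx; ring. Qed.
Lemma Cmul1 : left_id C1 Cmul.
Proof. by move=> [a b]; rewrite /Cmul /=; congr Cpx; ring. Qed.
Lemma CmulDl : left_distributive Cmul Cadd.
Proof. by move=> [a b] [c d] [e f]; rewrite /Cmul /Cadd /=; congr Cpx; ring. Qed.
Lemma C1_neq0 : C1 != C0.
Proof. apply/eqP=> -[] H; apply: R1_neq_R0; exact: H. Qed.
HB.instance Definition _ := GRing.Zmodule_isComNzRing.Build Cplx CmulA CmulC Cmul1 CmulDl C1_neq0.

Local Open Scope ring_scope.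

(** * Frames (= locales, via their frames of opens) *)
Record Frame := MkFrame {
  fcar :> Type;
  fle : fcar -> fcar -> Prop;
  ftop : fcar;
  fmeet : fcar -> fcar -> fcar;
  fjoin : (fcar -> Prop) -> fcar;
  fle_refl : forall x, fle x x;
  fle_trans : forall x y z, fle x y -> fle y z -> fle x z;
  fle_antisym : forall x y, fle x y -> fle y x -> x = y;
  ftop_max : forall x, fle x ftop;
  fmeet_glb : forall x y z, fle z (fmeet x y) <-> (fle z x /\ fle z y);
  fjoin_lub : forall (S : fcar -> Prop) z, fle (fjoin S) z <-> (forall x, S x -> fle x z);
  fdistr : forall a (S : fcar -> Prop),
      fmeet a (fjoin S) = fjoin (fun y => exists x, S x /\ y = fmeet a x)
}.

Definition fbot (L : Frame) : L := fjoin (fun _ : L => False).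

Definition locale_trivial (L : Frame) : Prop := ftop L = fbot L.

Definition frame_hom (A B : Frame) (h : A -> B) : Prop :=
  [/\ h (ftop A) = ftop B,
      (forall x y, h (fmeet x y) = fmeet (h x) (h y)) &
      (forall S : A -> Prop, h (fjoin S) = fjoin (fun y => exists x, S x /\ y = h x))].

(** A locale map F(S) -> F(R) is a frame homomorphism O(F R) -> O(F S), so a
    ring homomorphism f : R -> S is sent to a frame homomorphism
    Fmap f : Fobj R -> Fobj S.  Rings are unital (possibly zero, possibly
    noncommutative) rings: MathComp's pzRingType. *)
Record RingLocFunctor := MkRingLocFunctor {
  Fobj : pzRingType -> Frame;
  Fmap : forall (R S : pzRingType), {rmorphism R -> S} -> Fobj R -> Fobj S;
  Fmap_hom : forall (R S : pzRingType) (f : {rmorphism R -> S}), frame_hom (Fmap f);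
  Fmap_id : forall (R : pzRingType) (f : {rmorphism R -> R}),
      f =1 (fun x => x) -> forall x, Fmap f x = x;
  Fmap_comp : forall (R S T : pzRingType) (f : {rmorphism R -> S})
      (g : {rmorphism S -> T}) (h : {rmorphism R -> T}),
      h =1 g \o f -> forall x, Fmap h x = Fmap g (Fmap f x)
}.

(** * The Pierce spectrum: the ideal frame Idl(E(R)) of the boolean algebra of
    idempotents of a commutative ring R.  In E(R): e /\ f = e f, e \/ f = e + f - e f,
    e <= f iff e f = e.  An ideal is represented by its underlying subset of R;
    the order of Idl(E(R)) is inclusion. *)
Definition idempotent (R : comPzRingType) (e : R) : Prop := e * e = e.

Definition bool_ideal (R : comPzRingType) (I : R -> Prop) : Prop :=
  [/\ (forall e, I e -> idempotent e),
      I 0,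
      (forall e f, I e -> I f -> I (e + f - e * f)) &
      (forall e g, I e -> idempotent g -> g * e = g -> I g)].

Definition ideal_gen (R : comPzRingType) (U : R -> Prop) : R -> Prop :=
  fun e => forall J : R -> Prop, bool_ideal J -> (forall u, U u -> J u) -> J e.

Definition pierce_map (R S : comPzRingType) (f : {rmorphism R -> S})
  (I : R -> Prop) : S -> Prop :=
  ideal_gen (fun u => exists i, I i /\ u = f i).

(** F restricted to commutative rings is naturally isomorphic to the Pierce
    spectrum functor: there are frame isomorphisms alpha_R : O(F R) -> Idl(E R)
    (bijective frame homomorphisms), natural in R. *)
Definition restricts_to_pierce (F : RingLocFunctor) : Prop :=
  exists alpha : forall R : comPzRingType, Fobj F R -> (R -> Prop),
  [/\ (forall (R : comPzRingType) x, bool_ideal (alpha R x)),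
      (forall (R : comPzRingType) x y, (forall e, alpha R x e <-> alpha R y e) -> x = y),
      (forall (R : comPzRingType) (I : R -> Prop), bool_ideal I ->
          exists x, forall e, alpha R x e <-> I e),
      [/\ (forall (R : comPzRingType) e, alpha R (ftop _) e <-> idempotent e),
          (forall (R : comPzRingType) x y e,
              alpha R (fmeet x y) e <-> (alpha R x e /\ alpha R y e)) &
          (forall (R : comPzRingType) (S : Fobj F R -> Prop) e,
              alpha R (fjoin S) e <-> ideal_gen (fun u => exists x, S x /\ alpha R x u) e)] &
      (forall (R S : comPzRingType) (f : {rmorphism R -> S}) x e,
          alpha S (@Fmap F R S f x) e <-> pierce_map f (alpha R x) e)].

Definition kochen_specker (R : pzRingType) : Prop :=
  exists n : nat, (3 <= n)%nat /\ inhabited {rmorphism 'M[Cplx]_n -> R}.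

From Pilot Require Import Defs.
From HB Require Import structures.
From Stdlib Require Import Reals Lra ClassicalEpsilon FunctionalExtensionality PropExtensionality.
From mathcomp Require Import all_boot all_order all_algebra perm ring.
Set Implicit Arguments. Unset Strict Implicit. Unset Printing Implicit Defensive.
Import Order.TTheory GRing.Theory Num.Theory.

(* For a ring A and an idempotent Q, let [Q] be the open of F(A) obtained by
   transporting, along the ring map Z^2 -> A, (m, n) |-> mQ + n(1 - Q), the open
   of F(Z^2) = Idl(E(Z^2)) given by the principal ideal of the first coordinate
   idempotent.  Naturality of F on the commutative rings Z^k shows that every
   partition of unity Q_1 + ... + Q_k = 1 by orthogonal idempotents of A is a
   "context": the opens [Q_i] cover F(A) and are pairwise disjoint.

   Then
   rank-one projections onto 28 integer vectors of C^3, placed inside M_n(C),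
   give 13 contexts in which a checked refutation tree shows that [E_mm] is
   bottom for a matrix unit E_mm.  Since the E_mm are orthogonal and sum to 1,
   [1] is bottom, i.e. F(M_n(C)) is trivial.  Finally a Kochen--Specker ring R
   receives a ring map from some M_n(C), and F of it is a frame map
   F(M_n(C)) -> F(R), which sends top = bottom to top = bottom. *)

Section FrameFacts.
Variable L : Frame.

Lemma fbot_min (x : L) : fle (fbot L) x.
Proof. by rewrite /fbot; apply/fjoin_lub. Qed.

Lemma fle_bot_eq (x : L) : fle x (fbot L) -> x = fbot L.
Proof. by move=> H; apply: fle_antisym => //; apply: fbot_min. Qed.

Lemma fmeet_l (x y : L) : fle (fmeet x y) x.
Proof. by have /fmeet_glb[] := fle_refl (fmeet x y). Qed.

Lemma fmeet_r (x y : L) : fle (fmeet x y) y.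
Proof. by have /fmeet_glb[] := fle_refl (fmeet x y). Qed.

Lemma fle_meet (x y z : L) : fle z x -> fle z y -> fle z (fmeet x y).
Proof. by move=> zx zy; apply/fmeet_glb. Qed.

Lemma fmeetC (x y : L) : fmeet x y = fmeet y x.
Proof.
by apply: fle_antisym; apply: fle_meet;
  [apply: fmeet_r | apply: fmeet_l | apply: fmeet_r | apply: fmeet_l].
Qed.

Lemma fmeet_id (x : L) : fmeet x x = x.
Proof. by apply: fle_antisym; [apply: fmeet_l | apply: fle_meet; apply: fle_refl]. Qed.

Lemma fmeet_top (x : L) : fmeet x (ftop L) = x.
Proof.
by apply: fle_antisym; [apply: fmeet_l | apply: fle_meet; [apply: fle_refl | apply: ftop_max]].
Qed.

Lemma fle_join (S : L -> Prop) x : S x -> fle x (fjoin S).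
Proof. by move=> Sx; have /fjoin_lub := fle_refl (fjoin S); apply. Qed.

(* By distributivity, an element disjoint from every member of a cover is bottom. *)
Lemma disjoint_from_cover (m : L) (S : L -> Prop) :
  fle (ftop L) (fjoin S) ->
  (forall z, S z -> fle (fmeet m z) (fbot L)) -> fle m (fbot L).
Proof.
move=> cover disj.
have m_le : fle m (fmeet m (fjoin S)).
  by apply: fle_meet; [apply: fle_refl | apply: fle_trans (ftop_max m) cover].
by apply: fle_trans m_le _; rewrite fdistr; apply/fjoin_lub => y [x [Sx ->]]; apply: disj.
Qed.

End FrameFacts.

Section FrameHom.
Variables (A B : Frame) (h : A -> B).
Hypothesis h_hom : frame_hom h.

Lemma frame_hom_top : h (ftop A) = ftop B.
Proof. by case: h_hom. Qed.

Lemma frame_hom_meet (x y : A) : h (fmeet x y) = fmeet (h x) (h y).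
Proof. by case: h_hom. Qed.

Lemma frame_hom_join (S : A -> Prop) :
  h (fjoin S) = fjoin (fun y => exists x, S x /\ y = h x).
Proof. by case: h_hom. Qed.

Lemma frame_hom_bot : h (fbot A) = fbot B.
Proof. by rewrite /fbot frame_hom_join; apply: fle_antisym; apply/fjoin_lub => // y [x []]. Qed.

End FrameHom.

(* A refutation tree derives that a meet of chosen "atoms" is bottom: a Leaf i j
   closes a branch because atoms i and j are disjoint; a Node c t1 t2 t3 splits
   along the context number c, i.e. a cover by three atoms and a remainder. *)
Inductive refutation := Leaf of nat & nat | Node of nat & refutation & refutation & refutation.

Section Refutations.
Variables (L : Frame) (atom : nat -> L) (rest : L) (contexts : seq (nat * nat * nat)).
Variable disjointb : nat -> nat -> bool.
Hypothesis context_cover : forall c, c \in contexts ->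
  fle (ftop L) (fjoin (fun z => z = atom c.1.1 \/ z = atom c.1.2 \/ z = atom c.2 \/ z = rest)).
Hypothesis atoms_disjoint : forall i j, disjointb i j -> fle (fmeet (atom i) (atom j)) (fbot L).
Hypothesis rest_disjoint : forall i, fle (fmeet (atom i) rest) (fbot L).

Fixpoint refutes (S : seq nat) (t : refutation) : bool :=
  match t with
  | Leaf i j => [&& i \in S, j \in S & disjointb i j]
  | Node c t1 t2 t3 =>
      let x := nth (0, 0, 0)%N contexts c in
      [&& (c < size contexts)%N, refutes (x.1.1 :: S) t1, refutes (x.1.2 :: S) t2
        & refutes (x.2 :: S) t3]
  end.

Definition meet_of (S : seq nat) : L := foldr (fun i m => fmeet (atom i) m) (ftop L) S.

Lemma meet_of_le S i : i \in S -> fle (meet_of S) (atom i).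
Proof.
elim: S => //= j S IH; rewrite inE => /orP[/eqP-> | /IH H]; first exact: fmeet_l.
exact: fle_trans (fmeet_r _ _) H.
Qed.

Lemma refutes_sound t : forall S, S <> [::] -> refutes S t -> fle (meet_of S) (fbot L).
Proof.
elim: t => [i j | c t1 IH1 t2 IH2 t3 IH3] S S_nil /=.
  case/and3P=> Si Sj ij; apply: fle_trans (atoms_disjoint ij).
  by apply: fle_meet; apply: meet_of_le.
case/and4P=> c_in ref1 ref2 ref3.
have := context_cover (mem_nth (0, 0, 0)%N c_in).
move/disjoint_from_cover; apply=> z [-> | [-> | [-> | ->]]].
- by rewrite fmeetC; apply: (IH1 (_ :: S)).
- by rewrite fmeetC; apply: (IH2 (_ :: S)).
- by rewrite fmeetC; apply: (IH3 (_ :: S)).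
- case: S S_nil {ref1 ref2 ref3} => // s S _ /=.
  apply: fle_trans (rest_disjoint s); apply: fle_meet; last exact: fmeet_r.
  exact: fle_trans (fmeet_l _ _) (fmeet_l _ _).
Qed.

End Refutations.

Definition inv_nat (N : nat) : Cplx := Cpx (/ INR N) R0.

Local Open Scope ring_scope.

Lemma natr_Cplx (N : nat) : (N%:R : Cplx) = Cpx (INR N) (INR 0).
Proof.
elim: N => [|N IH] //; rewrite mulrSr IH S_INR /GRing.add /= /Cadd /=; congr Cpx; lra.
Qed.

Lemma inv_natP (N : nat) : (0 < N)%N -> (N%:R : Cplx) * inv_nat N = 1.
Proof.
move=> N_gt0; rewrite natr_Cplx /GRing.mul /= /Cmul /= /C1.
have N_neq0 := @not_0_INR N ltac:(by case: N N_gt0).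
by congr Cpx; simpl; [rewrite Rinv_r //; lra | lra].
Qed.

Definition ivec := (int * int * int)%type.
Definition icoord (v : ivec) (k : nat) : int := nth 0 [:: v.1.1; v.1.2; v.2] k.
Definition idot (u v : ivec) : int := u.1.1 * v.1.1 + u.1.2 * v.1.2 + u.2 * v.2.
Definition inorm2 (v : ivec) : nat := absz (idot v v).
Definition ccoord (v : ivec) (k : nat) : Cplx := (icoord v k)%:~R.

Definition outer (u v : ivec) : 'M[Cplx]_3 := \matrix_(i, j) (ccoord u i * ccoord v j).
Definition proj (v : ivec) : 'M[Cplx]_3 := inv_nat (inorm2 v) *: outer v v.

Lemma idotC (u v : ivec) : idot u v = idot v u.
Proof. by rewrite /idot !(mulrC u.1.1) !(mulrC u.1.2) !(mulrC u.2). Qed.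

Lemma sum3 (G : 'I_3 -> Cplx) : \sum_(k < 3) G k = G ord0 + G (inord 1) + G (inord 2).
Proof.
rewrite !big_ord_recl big_ord0 addr0 addrA.
by congr (G _ + G _ + G _); apply: val_inj => //=; rewrite inordK.
Qed.

Lemma idot_Cplx (u v : ivec) : (idot u v)%:~R = \sum_(k < 3) ccoord u k * ccoord v k :> Cplx.
Proof. by rewrite sum3 /idot /ccoord !inordK // !rmorphD !rmorphM. Qed.

Lemma outer_mul (a b c d : ivec) : outer a b *m outer c d = (idot b c)%:~R *: outer a d.
Proof.
apply/matrixP => i j; rewrite !mxE idot_Cplx mulr_suml; apply: eq_bigr => k _.
by rewrite !mxE; ring.
Qed.

Lemma inorm2E (v : ivec) : 0 < idot v v -> (idot v v)%:~R = (inorm2 v)%:R :> Cplx.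
Proof. by move=> v_pos; rewrite /inorm2 -[X in X%:~R](gez0_abs (ltW v_pos)). Qed.

Lemma inorm2_gt0 (v : ivec) : 0 < idot v v -> (0 < inorm2 v)%N.
Proof. by move=> v_pos; rewrite /inorm2 absz_gt0 gt_eqF. Qed.

Lemma proj_mul u v :
  proj u *m proj v = (inv_nat (inorm2 u) * inv_nat (inorm2 v) * (idot u v)%:~R) *: outer u v.
Proof. by rewrite /proj -scalemxAl -scalemxAr outer_mul !scalerA. Qed.

Lemma proj_orth u v : idot u v = 0 -> proj u *m proj v = 0.
Proof. by move=> uv; rewrite proj_mul uv mulr0 scale0r. Qed.

Lemma proj_idem v : 0 < idot v v -> proj v *m proj v = proj v.
Proof.
move=> v_pos; rewrite proj_mul inorm2E // -mulrA [_ * _%:R]mulrC inv_natP ?mulr1 //.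
exact: inorm2_gt0.
Qed.

Lemma clear_denominators (R : comPzRingType) (cu cv cw nu nv nw x y z d : R) :
  cu * nu = 1 -> cv * nv = 1 -> cw * nw = 1 ->
  nv * nw * x + nu * nw * y + nu * nv * z = nu * nv * nw * d ->
  cu * x + cv * y + cw * z = d.
Proof.
move=> Hu Hv Hw H.
have E1 : cu * cv * cw * (nv * nw * x + nu * nw * y + nu * nv * z) =
  cu * x * ((cv * nv) * (cw * nw)) + cv * y * ((cu * nu) * (cw * nw)) +
  cw * z * ((cu * nu) * (cv * nv)) by ring.
have E2 : cu * cv * cw * (nu * nv * nw * d) = d * ((cu * nu) * (cv * nv) * (cw * nw)) by ring.
by move: E1; rewrite H E2 Hu Hv Hw !mulr1 => ->.
Qed.

(* The integer identity |v|^2|w|^2 u u^T + |u|^2|w|^2 v v^T + |u|^2|v|^2 w w^T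
   = |u|^2|v|^2|w|^2 I, decidable entrywise. *)
Definition resolves_identity (u v w : ivec) : bool :=
  all (fun i => all (fun j =>
    idot v v * idot w w * (icoord u i * icoord u j) +
    idot u u * idot w w * (icoord v i * icoord v j) +
    idot u u * idot v v * (icoord w i * icoord w j) ==
    idot u u * idot v v * idot w w * (i == j)%:Z) (iota 0 3)) (iota 0 3).

Lemma proj_sum u v w : 0 < idot u u -> 0 < idot v v -> 0 < idot w w ->
  resolves_identity u v w -> proj u + proj v + proj w = 1%:M.
Proof.
move=> u_pos v_pos w_pos /allP res; apply/matrixP => i j; rewrite !mxE.
have i_lt3 : (i : nat) \in iota 0 3 by rewrite mem_iota ltn_ord.
have j_lt3 : (j : nat) \in iota 0 3 by rewrite mem_iota ltn_ord.
move: (allP (res i i_lt3) j j_lt3) => /eqP /(congr1 (fun z : int => z%:~R : Cplx)).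
rewrite !rmorphD !rmorphM /= !inorm2E //.
have -> : ((i == j)%:Z)%:~R = ((i == j)%:R : Cplx) by case: (i == j).
move=> H; apply: (clear_denominators _ _ _ H); rewrite mulrC; apply: inv_natP;
  exact: inorm2_gt0.
Qed.

(* M_3(C) sits in M_n(C) (as a non-unital subring) through an injection of indices. *)
Section Embedding.
Variables (n : nat) (f : 'I_3 -> 'I_n).
Hypothesis f_inj : injective f.

Definition index_mx : 'M[Cplx]_(n, 3) := \matrix_(i, a) (i == f a)%:R.

Lemma index_mx_isometry : index_mx^T *m index_mx = 1%:M.
Proof.
apply/matrixP => a b; rewrite !mxE (bigD1 (f a)) //= big1 => [|i Hi].
  by rewrite !mxE eqxx mul1r addr0 (inj_eq f_inj).
by rewrite !mxE (negbTE Hi) mul0r.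
Qed.

Definition embed (P : 'M[Cplx]_3) : 'M[Cplx]_n := index_mx *m P *m index_mx^T.

Lemma embed_mul P Q : embed P *m embed Q = embed (P *m Q).
Proof. by rewrite /embed !mulmxA -(mulmxA (index_mx *m P)) index_mx_isometry mulmx1. Qed.

Lemma embedD P Q : embed (P + Q) = embed P + embed Q.
Proof. by rewrite /embed mulmxDr mulmxDl. Qed.

Lemma embed0 : embed 0 = 0.
Proof. by rewrite /embed mulmx0 mul0mx. Qed.

Lemma embed_delta : embed (delta_mx 0 0) = delta_mx (f 0) (f 0).
Proof.
apply/matrixP => i j; rewrite !mxE (bigD1 0) //= big1 => [|k Hk]; last first.
  by rewrite !mxE big1 ?mul0r // => l _; rewrite !mxE (negbTE Hk) andbF mulr0.
rewrite addr0 !mxE (bigD1 0) //= big1 => [|l Hl]; last by rewrite !mxE (negbTE Hl) mulr0.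
rewrite !mxE !eqxx addr0 mulr1.
by case: (i == f 0); case: (j == f 0); rewrite ?mulr1 ?mulr0 ?mul0r.
Qed.

End Embedding.

(* A Kochen--Specker configuration: 28 vectors of Z^3 (the first is e_1) and 13
   contexts, each an orthogonal basis of C^3 given by indices into the list,
   together with a refutation tree for the single atom e_1 when the atoms are the
   projections onto these vectors and two atoms are disjoint iff orthogonal. *)
Definition ks_vectors : seq ivec :=
  [:: (1, 0, 0); (0, 0, 1); (0, 1, 0); (0, 1, 1); (1, -2, 0); (1, -2, 2); (1, -1, -2);
      (1, -1, 0); (1, -1, 1); (1, 0, -2); (1, 0, -1); (1, 0, 1); (1, 0, 2); (1, 1, -1);
      (1, 1, 0); (1, 2, -2); (1, 2, 0); (1, 2, 1); (2, -2, -1); (2, -1, -2); (2, -1, 0);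
      (2, -1, 1); (2, 0, -1); (2, 0, 1); (2, 1, -1); (2, 1, 0); (2, 1, 2); (2, 2, 1)]%Z.

Definition ks_contexts : seq (nat * nat * nat) :=
  [:: (0, 1, 2); (1, 4, 25); (1, 7, 14); (1, 16, 20); (2, 9, 23); (2, 10, 11); (2, 12, 22);
      (3, 8, 24); (3, 13, 21); (5, 19, 27); (6, 8, 14); (8, 10, 17); (15, 18, 26)]%N.

Definition ks_refutation : refutation :=
  Node 1 (Leaf 1 0) (Node 7 (Leaf 3 0) (Node 2 (Leaf 1 4) (Node 5 (Leaf 2 0) (Leaf 10 8)
  (Node 8 (Leaf 3 8) (Leaf 13 11) (Node 3 (Leaf 1 7) (Leaf 16 21) (Node 4 (Leaf 2 11)
  (Leaf 9 21) (Node 9 (Node 6 (Leaf 2 23) (Node 12 (Leaf 15 23) (Leaf 18 12) (Leaf 26 4))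
  (Leaf 22 5)) (Leaf 19 11) (Leaf 27 7)))))) (Leaf 14 8)) (Leaf 24 4)) (Node 2 (Leaf 1 25)
  (Node 8 (Leaf 3 0) (Leaf 13 7) (Node 3 (Leaf 1 7) (Leaf 16 21) (Node 4 (Leaf 2 0)
  (Leaf 9 21) (Node 9 (Leaf 5 25) (Node 5 (Leaf 2 23) (Node 10 (Leaf 6 23) (Leaf 8 10)
  (Leaf 14 7)) (Leaf 11 19)) (Leaf 27 7))))) (Node 7 (Leaf 3 0) (Leaf 8 14) (Node 6
  (Leaf 2 0) (Leaf 12 24) (Node 3 (Leaf 1 14) (Node 8 (Leaf 3 24) (Node 5 (Leaf 2 22)
  (Node 9 (Leaf 5 22) (Leaf 19 16) (Node 4 (Leaf 2 10) (Leaf 9 27) (Node 12 (Leaf 15 23)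
  (Leaf 18 14) (Leaf 26 10)))) (Leaf 11 13)) (Leaf 21 16)) (Node 11 (Leaf 8 24) (Node 12
  (Leaf 15 20) (Leaf 18 14) (Leaf 26 10)) (Leaf 17 20)))))).

Definition e1 : ivec := (1, 0, 0)%Z.
Definition ks_vec (i : nat) : ivec := nth e1 ks_vectors i.

Definition ks_orthb (i j : nat) : bool := idot (ks_vec i) (ks_vec j) == 0.

Definition ks_context_okb (c : nat * nat * nat) : bool :=
  let: (u, v, w) := (ks_vec c.1.1, ks_vec c.1.2, ks_vec c.2) in
  [&& idot u v == 0, idot u w == 0, idot v w == 0 & resolves_identity u v w].

Lemma ks_valid : [&& all ks_context_okb ks_contexts, all (fun v => 0 < idot v v) ks_vectors
  & refutes ks_contexts ks_orthb [:: 0%N] ks_refutation].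
Proof. by vm_compute. Qed.

Lemma ks_vec_pos i : 0 < idot (ks_vec i) (ks_vec i).
Proof.
case: (ltnP i (size ks_vectors)) => Hi; last by rewrite /ks_vec nth_default.
by case/and3P: ks_valid => _ /allP pos _; apply/pos/mem_nth.
Qed.

Lemma proj_e1 : proj e1 = delta_mx 0 0.
Proof.
have inv1 : inv_nat 1 = 1 by have := @inv_natP 1 isT; rewrite mulr1n mul1r.
apply/matrixP => i j; rewrite !mxE /inorm2 /= inv1 mul1r /ccoord.
by case: i => [[|[|[|?]]] ?] //; case: j => [[|[|[|?]]] ?] //=; rewrite ?mulr0 ?mul0r ?mulr1.
Qed.

Definition idem (A : pzRingType) (P : A) : Prop := P * P = P.
Definition orth (A : pzRingType) (P Q : A) : Prop := P * Q = 0 /\ Q * P = 0.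

Lemma idem0 (A : pzRingType) : idem (0 : A).
Proof. by rewrite /idem mul0r. Qed.

Lemma orth0 (A : pzRingType) (P : A) : orth P 0.
Proof. by rewrite /orth mul0r mulr0. Qed.

Lemma idemD (A : pzRingType) (P Q : A) : idem P -> idem Q -> orth P Q -> idem (P + Q).
Proof. by rewrite /idem => PP QQ [PQ QP]; rewrite mulrDl !mulrDr PP QQ PQ QP addr0 add0r. Qed.

Lemma idem_compl (A : pzRingType) (E : A) : idem E -> idem (1 - E) /\ orth E (1 - E).
Proof.
rewrite /idem /orth => EE.
have E_E' : E * (1 - E) = 0 by rewrite mulrBr mulr1 EE subrr.
have E'_E : (1 - E) * E = 0 by rewrite mulrBl mul1r EE subrr.
by split => //; rewrite mulrBl mul1r E_E' subr0.
Qed.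

Lemma orth_compl2 (A : pzRingType) (P Q : A) : idem P -> idem Q -> orth P Q ->
  orth P (1 - P - Q) /\ orth Q (1 - P - Q).
Proof.
rewrite /idem => PP QQ [PQ QP]; split; split.
- by rewrite !mulrBr mulr1 PP PQ subr0 subrr.
- by rewrite !mulrBl mul1r PP QP subrr subr0.
- by rewrite !mulrBr mulr1 QP QQ subr0 subrr.
- by rewrite !mulrBl mul1r PQ QQ subr0 subrr.
Qed.

Definition partition_of_unity (A : pzRingType) k (Q : 'I_k -> A) : Prop :=
  [/\ forall i, Q i * Q i = Q i, forall i j, i != j -> Q i * Q j = 0 & \sum_i Q i = 1].

HB.instance Definition _ (k : nat) :=
  GRing.PzRing_hasCommutativeMul.Build {ffun 'I_k -> int} (@ffun_mulC _ _).
Definition Zpow (k : nat) : comPzRingType := {ffun 'I_k -> int}.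
Definition coord_idem (k : nat) (i : 'I_k) : Zpow k := [ffun j => (j == i)%:R].

Lemma coord_idem_idem k (i : 'I_k) : Defs.idempotent (coord_idem i).
Proof. by apply/ffunP => j; rewrite !ffunE; case: (j == i); rewrite ?mulr1 ?mulr0. Qed.

Lemma coord_idem_orth k (i j : 'I_k) : i != j -> coord_idem i * coord_idem j = 0.
Proof.
move=> ij; apply/ffunP => l; rewrite !ffunE.
by case: (eqVneq l i) => [->|_]; [rewrite (negbTE ij) mulr0 | rewrite mul0r].
Qed.

Lemma coord_idem_sum k : \sum_i coord_idem i = 1 :> Zpow k.
Proof.
apply/ffunP => j; rewrite sum_ffunE !ffunE (bigD1 j) //= ffunE eqxx big1 ?addr0 //.
by move=> i Hi; rewrite ffunE eq_sym (negbTE Hi).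
Qed.

Definition pou_map (A : pzRingType) k (Q : 'I_k -> A) (H : partition_of_unity Q)
  (c : Zpow k) : A := \sum_i Q i *~ c i.

Lemma pou_map_zmod (A : pzRingType) k (Q : 'I_k -> A) (H : partition_of_unity Q) :
  GRing.zmod_morphism (pou_map H).
Proof. by move=> c d; rewrite /pou_map -sumrB; apply: eq_bigr => i _; rewrite !ffunE mulrzBr. Qed.

Lemma pou_map_monoid (A : pzRingType) k (Q : 'I_k -> A) (H : partition_of_unity Q) :
  GRing.monoid_morphism (pou_map H).
Proof.
case: H => QQ orthQ sumQ; split.
  by rewrite /pou_map -sumQ; apply: eq_bigr => i _; rewrite ffunE.
move=> c d; rewrite /pou_map mulr_suml; apply: eq_bigr => i _.
rewrite mulr_sumr (bigD1 i) //= big1 ?addr0.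
  by rewrite ffunE mulrzAl mulrzAr QQ -mulrzA mulrC.
by move=> j /negbTE ji; rewrite mulrzAl mulrzAr orthQ ?mul0rz // eq_sym ji.
Qed.

HB.instance Definition _ (A : pzRingType) k (Q : 'I_k -> A) (H : partition_of_unity Q) :=
  GRing.isZmodMorphism.Build (Zpow k) A (pou_map H) (pou_map_zmod H).
HB.instance Definition _ (A : pzRingType) k (Q : 'I_k -> A) (H : partition_of_unity Q) :=
  GRing.isMonoidMorphism.Build (Zpow k) A (pou_map H) (pou_map_monoid H).

(* Every element Q of A yields the partition of unity (Q, 1 - Q) when Q is
   idempotent; to keep this total, non-idempotents are replaced by 0. *)
Definition idem_part (A : pzRingType) (Q : A) : A := if Q * Q == Q then Q else 0.

Lemma idem_partP (A : pzRingType) (Q : A) : idem (idem_part Q).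
Proof. by rewrite /idem /idem_part; case: eqP => // _; rewrite mulr0. Qed.

Definition split2 (A : pzRingType) (Q : A) (i : 'I_2) : A :=
  if i == ord0 then idem_part Q else 1 - idem_part Q.

Lemma ord2_cases (i : 'I_2) : i = ord0 \/ i = ord_max.
Proof. by case: i => [[|[|m]] Hm]; [left | right | by []]; apply: val_inj. Qed.

Lemma split2_pou (A : pzRingType) (Q : A) : partition_of_unity (split2 Q).
Proof.
have [Q'Q' [Q_Q' Q'_Q]] := idem_compl (idem_partP Q).
split.
- by move=> i; case: (ord2_cases i) => ->; [apply: idem_partP | apply: Q'Q'].
- by move=> i j; case: (ord2_cases i) => ->; case: (ord2_cases j) => ->.
- by rewrite big_ord_recl big_ord1 /split2 /= addrC subrK.
Qed.

Definition split_map (A : pzRingType) (Q : A) : {rmorphism Zpow 2 -> A} :=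
  pou_map (split2_pou Q).

(* spread_at i : Z^2 -> Z^k puts the first coordinate at i and the second elsewhere;
   it factors split_map (Q i) through pou_map Q. *)
Definition spread_at k (i : 'I_k) (c : Zpow 2) : Zpow k :=
  [ffun j => if j == i then c ord0 else c ord_max].

Lemma spread_at_zmod k (i : 'I_k) : GRing.zmod_morphism (spread_at i).
Proof. by move=> c d; apply/ffunP => j; rewrite !ffunE; case: (j == i). Qed.

Lemma spread_at_monoid k (i : 'I_k) : GRing.monoid_morphism (spread_at i).
Proof. by split; [|move=> c d]; apply/ffunP => j; rewrite !ffunE; case: (j == i). Qed.

HB.instance Definition _ k (i : 'I_k) :=
  GRing.isZmodMorphism.Build (Zpow 2) (Zpow k) (spread_at i) (spread_at_zmod i).
HB.instance Definition _ k (i : 'I_k) :=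
  GRing.isMonoidMorphism.Build (Zpow 2) (Zpow k) (spread_at i) (spread_at_monoid i).

Lemma split_map_factor (A : pzRingType) k (Q : 'I_k -> A) (H : partition_of_unity Q) i :
  split_map (Q i) =1 pou_map H \o spread_at i.
Proof.
have [QiQi _ sumQ] := H.
have sum_others : \sum_(j | j != i) Q j = 1 - Q i.
  by move: sumQ; rewrite (bigD1 i) //= => <-; rewrite addrC addrK.
move=> c /=; rewrite /pou_map big_ord_recl big_ord1 /split2 /= /idem_part QiQi eqxx.
rewrite (bigD1 i) //= ffunE eqxx; congr (_ + _).
rewrite -sum_others mulrz_suml; apply: eq_bigr => j /negbTE ji.
by rewrite ffunE ji; congr (_ *~ c _); apply: val_inj.
Qed.

Lemma spread_at_coord k (i : 'I_k) : spread_at i (coord_idem ord0) = coord_idem i.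
Proof. by apply/ffunP => j; rewrite !ffunE; case: (j == i). Qed.

Definition family4 (A : pzRingType) (Q1 Q2 Q3 Q4 : A) (i : 'I_4) : A :=
  nth 0 [:: Q1; Q2; Q3; Q4] i.

Lemma family4_pou (A : pzRingType) (Q1 Q2 Q3 Q4 : A) :
  idem Q1 -> idem Q2 -> idem Q3 -> idem Q4 ->
  orth Q1 Q2 -> orth Q1 Q3 -> orth Q1 Q4 -> orth Q2 Q3 -> orth Q2 Q4 -> orth Q3 Q4 ->
  Q1 + Q2 + Q3 + Q4 = 1 -> partition_of_unity (family4 Q1 Q2 Q3 Q4).
Proof.
move=> ? ? ? ? [? ?] [? ?] [? ?] [? ?] [? ?] [? ?] sumQ; split.
- by case=> [[|[|[|[|?]]]] ?].
- by case=> [[|[|[|[|?]]]] ?] //; case=> [[|[|[|[|?]]]] ?].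
- by rewrite !big_ord_recl big_ord0 /family4 /= addr0 !addrA.
Qed.

Lemma complement_pou (A : pzRingType) (P Q : A) : idem P -> idem Q -> orth P Q ->
  partition_of_unity (family4 P Q (1 - P - Q) 0).
Proof.
move=> PP QQ PQ; have [PR QR] := orth_compl2 PP QQ PQ.
have [RR _] := idem_compl (idemD PP QQ PQ); rewrite opprD addrA in RR.
apply: family4_pou PQ PR (orth0 P) QR (orth0 Q) (orth0 _) _ => //; first exact: idem0.
by rewrite addr0 -[1 - P - Q]addrA -opprD [_ + (1 - _)]addrC subrK.
Qed.

Section EmbeddedContexts.
Variables (n : nat) (f : 'I_3 -> 'I_n).
Hypothesis f_inj : injective f.

Lemma idem_embed (P : 'M[Cplx]_3) : P *m P = P -> idem (embed f P).
Proof. by move=> PP; rewrite /idem -mulmxE embed_mul // PP. Qed.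

Lemma orth_embed (P Q : 'M[Cplx]_3) : P *m Q = 0 -> Q *m P = 0 -> orth (embed f P) (embed f Q).
Proof. by move=> PQ QP; rewrite /orth -!mulmxE !embed_mul // PQ QP embed0. Qed.

Definition outside : 'M[Cplx]_n := 1 - embed f 1%:M.

Lemma idem_outside : idem outside.
Proof. by have [] := idem_compl (idem_embed (mulmx1 1%:M)). Qed.

Lemma orth_outside (P : 'M[Cplx]_3) : orth (embed f P) outside.
Proof.
rewrite /orth /outside mulrBr mulrBl mulr1 mul1r -!mulmxE !embed_mul //.
by rewrite mulmx1 mul1mx !subrr.
Qed.

Lemma orth_embed_proj u v : idot u v = 0 -> orth (embed f (proj u)) (embed f (proj v)).
Proof. by move=> uv; apply: orth_embed; apply: proj_orth; rewrite // idotC. Qed.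

Lemma embedded_context_pou u v w : 0 < idot u u -> 0 < idot v v -> 0 < idot w w ->
  idot u v = 0 -> idot u w = 0 -> idot v w = 0 -> resolves_identity u v w ->
  partition_of_unity
    (family4 (embed f (proj u)) (embed f (proj v)) (embed f (proj w)) outside).
Proof.
move=> u_pos v_pos w_pos uv uw vw res.
have idem_proj x : 0 < idot x x -> idem (embed f (proj x)) by move=> ?; apply/idem_embed/proj_idem.
apply: (family4_pou (idem_proj _ u_pos) (idem_proj _ v_pos) (idem_proj _ w_pos) idem_outside
  (orth_embed_proj uv) (orth_embed_proj uw) (orth_outside _) (orth_embed_proj vw)
  (orth_outside _) (orth_outside _)).
by rewrite -!embedD proj_sum // /outside addrC subrK.
Qed.

End EmbeddedContexts.

Lemma idempotent_join (R : comPzRingType) (e f : R) :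
  Defs.idempotent e -> Defs.idempotent f -> Defs.idempotent (e + f - e * f).
Proof.
rewrite /Defs.idempotent => ee ff; apply/eqP; rewrite -subr_eq0.
have -> : (e + f - e * f) * (e + f - e * f) - (e + f - e * f) =
  (e * e - e) * (1 + f * f - f - f) + (f * f - f) * (1 - e) by ring.
by rewrite ee ff !subrr !mul0r addr0.
Qed.

Definition principal (R : comPzRingType) (e : R) : R -> Prop :=
  fun g => Defs.idempotent g /\ g * e = g.

Lemma principal_ideal (R : comPzRingType) (e : R) : bool_ideal (principal e).
Proof.
split.
- by move=> g [].
- by split; rewrite /Defs.idempotent mul0r.
- move=> g h [gg ge] [hh he]; split; first exact: idempotent_join.
  apply/eqP; rewrite -subr_eq0.
  have -> : (g + h - g * h) * e - (g + h - g * h) =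
    (g * e - g) + (h * e - h) - g * (h * e - h) by ring.
  by rewrite ge he !subrr mulr0 !addr0 subrr.
- by move=> g k [gg ge] kk kg; split => //; rewrite -kg -mulrA ge.
Qed.

Lemma top_ideal (R : comPzRingType) : bool_ideal (@Defs.idempotent R).
Proof. by split => //; [rewrite /Defs.idempotent mul0r | apply: idempotent_join]. Qed.

Lemma zero_ideal (R : comPzRingType) : bool_ideal (fun g : R => g = 0).
Proof.
split=> [e -> | // | e f -> -> | e g -> _].
- by rewrite /Defs.idempotent mul0r.
- by rewrite mul0r !subr0 addr0.
- by rewrite mulr0.
Qed.

Lemma pierce_map_principal (R S : comPzRingType) (f : {rmorphism R -> S}) (e : R) (g : S) :
  Defs.idempotent e -> pierce_map f (principal e) g <-> principal (f e) g.
Proof.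
move=> ee; split.
- move=> H; apply: H; first exact: principal_ideal.
  move=> u [i [[ii ie] ->]]; split; first by rewrite /Defs.idempotent -rmorphM ii.
  by rewrite -rmorphM ie.
- move=> [gg ge] J [_ _ _ J_down] f_in_J; apply: (J_down (f e)) => //.
  by apply: f_in_J; exists e.
Qed.

Section PierceRestriction.
Variable F : RingLocFunctor.
Variable alpha : forall R : comPzRingType, Fobj F R -> (R -> Prop).
Hypothesis alpha_ideal : forall (R : comPzRingType) (x : Fobj F R), bool_ideal (alpha x).
Hypothesis alpha_inj : forall (R : comPzRingType) (x y : Fobj F R),
  (forall e, alpha x e <-> alpha y e) -> x = y.
Hypothesis alpha_surj : forall (R : comPzRingType) (I : R -> Prop), bool_ideal I ->
  exists x : Fobj F R, forall e, alpha x e <-> I e.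
Hypothesis alpha_top : forall (R : comPzRingType) (e : R),
  alpha (ftop (Fobj F R)) e <-> Defs.idempotent e.
Hypothesis alpha_meet : forall (R : comPzRingType) (x y : Fobj F R) e,
  alpha (fmeet x y) e <-> (alpha x e /\ alpha y e).
Hypothesis alpha_join : forall (R : comPzRingType) (S : Fobj F R -> Prop) e,
  alpha (fjoin S) e <-> ideal_gen (fun u => exists x, S x /\ alpha x u) e.
Hypothesis alpha_nat : forall (R S : comPzRingType) (f : {rmorphism R -> S}) (x : Fobj F R) e,
  alpha (Fmap f x) e <-> pierce_map f (alpha x) e.

Definition principal_open (R : comPzRingType) (e : R) : Fobj F R :=
  proj1_sig (constructive_indefinite_description _ (alpha_surj (principal_ideal e))).

Lemma alpha_principal (R : comPzRingType) (e g : R) :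
  alpha (principal_open e) g <-> principal e g.
Proof.
exact: (proj2_sig (constructive_indefinite_description _ (alpha_surj (principal_ideal e)))).
Qed.

Lemma alpha_bot (R : comPzRingType) (g : R) : alpha (fbot _) g <-> g = 0.
Proof.
rewrite /fbot alpha_join; split=> [gen | -> J []//].
by apply: (gen (fun h => h = 0)); [apply: zero_ideal | move=> u [x []]].
Qed.

Lemma Fmap_principal (R S : comPzRingType) (f : {rmorphism R -> S}) (e : R) :
  Defs.idempotent e -> Fmap f (principal_open e) = principal_open (f e).
Proof.
move=> ee; apply: alpha_inj => g; rewrite alpha_nat alpha_principal.
have -> : alpha (principal_open e) = principal e.
  by apply: functional_extensionality => h; apply: propositional_extensionality;
    apply: alpha_principal.
exact: pierce_map_principal.
Qed.

(* In Z^k, the coordinate idempotents generate E(Z^k), so their principal opens cover. *)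
Lemma Zpow_cover k :
  ftop (Fobj F (Zpow k)) = fjoin (fun z => exists i, z = principal_open (coord_idem i)).
Proof.
apply: alpha_inj => g; rewrite alpha_top alpha_join; split=> [gg J [_ J0 J_join J_down] gen | gen].
- have J_coord i : J (coord_idem i).
    apply: gen; exists (principal_open (coord_idem i)); split; first by exists i.
    by apply/alpha_principal; split; apply: coord_idem_idem.
  have J_sum (s : seq 'I_k) : uniq s -> J (\sum_(i <- s) coord_idem i).
    elim: s => [|x s IH] /=; first by rewrite big_nil.
    case/andP=> x_notin s_uniq; rewrite big_cons.
    have x_orth : coord_idem x * \sum_(i <- s) coord_idem i = 0.
      rewrite mulr_sumr big1_seq // => i /andP[_ i_in].
      by apply: coord_idem_orth; apply: contraNneq x_notin => ->.
    by have := J_join _ _ (J_coord x) (IH s_uniq); rewrite x_orth subr0.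
  apply: (J_down (\sum_(i <- enum 'I_k) coord_idem i)) => //; first exact/J_sum/enum_uniq.
  by rewrite big_enum /= coord_idem_sum mulr1.
- apply: (gen (@Defs.idempotent _)); first exact: top_ideal.
  by move=> u [x [_ xu]]; case: (alpha_ideal x) => x_idem _ _ _; apply: x_idem.
Qed.

Lemma Zpow_disjoint k (i j : 'I_k) : i != j ->
  fmeet (principal_open (coord_idem i)) (principal_open (coord_idem j)) = fbot _.
Proof.
move=> ij; apply: alpha_inj => g; rewrite alpha_meet !alpha_principal alpha_bot.
split=> [[[gg gi] [_ gj]] | ->].
- by rewrite -gj -gi -mulrA coord_idem_orth // mulr0.
- by split; split; rewrite /Defs.idempotent ?mul0r.
Qed.

Definition idem_open (A : pzRingType) (Q : A) : Fobj F A :=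
  Fmap (split_map Q) (principal_open (coord_idem (ord0 : 'I_2))).

Lemma idem_open_pou (A : pzRingType) k (Q : 'I_k -> A) (H : partition_of_unity Q) i :
  idem_open (Q i) = Fmap (pou_map H) (principal_open (coord_idem i)).
Proof.
rewrite /idem_open (Fmap_comp (split_map_factor H i)) Fmap_principal;
  last exact: coord_idem_idem.
by congr (Fmap _ (principal_open _)); apply: spread_at_coord.
Qed.

Lemma pou_cover (A : pzRingType) k (Q : 'I_k -> A) (H : partition_of_unity Q) :
  fle (ftop _) (fjoin (fun z => exists i, z = idem_open (Q i))).
Proof.
rewrite -(frame_hom_top (Fmap_hom F (pou_map H))) Zpow_cover.
rewrite (frame_hom_join (Fmap_hom F _)); apply/fjoin_lub => y [x [[i ->] ->]].
by apply: fle_join; exists i; rewrite idem_open_pou.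
Qed.

Lemma pou_disjoint (A : pzRingType) k (Q : 'I_k -> A) (H : partition_of_unity Q) i j :
  i != j -> fmeet (idem_open (Q i)) (idem_open (Q j)) = fbot _.
Proof.
move=> ij; rewrite !(idem_open_pou H) -(frame_hom_meet (Fmap_hom F _)).
by rewrite Zpow_disjoint // (frame_hom_bot (Fmap_hom F _)).
Qed.

Lemma cover4 (A : pzRingType) (Q1 Q2 Q3 Q4 : A) :
  partition_of_unity (family4 Q1 Q2 Q3 Q4) ->
  fle (ftop _) (fjoin (fun z => z = idem_open Q1 \/ z = idem_open Q2 \/
                                z = idem_open Q3 \/ z = idem_open Q4)).
Proof.
move=> H; apply: fle_trans (pou_cover H) _; apply/fjoin_lub => z [i ->].
by apply: fle_join; case: i => [[|[|[|[|?]]]] ?] //=; rewrite /family4 /=; tauto.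
Qed.

(* Orthogonal idempotents have disjoint opens, as they lie in a common context. *)
Lemma orth_disjoint (A : pzRingType) (P Q : A) : idem P -> idem Q -> orth P Q ->
  fmeet (idem_open P) (idem_open Q) = fbot _.
Proof.
move=> PP QQ PQ.
exact: (pou_disjoint (complement_pou PP QQ PQ) (i := 0) (j := 1)).
Qed.

Lemma idem_open0 (A : pzRingType) : fle (idem_open (0 : A)) (fbot _).
Proof. by rewrite -(orth_disjoint (idem0 A) (idem0 A) (orth0 0)) fmeet_id; apply: fle_refl. Qed.

(* The open of a sum of orthogonal idempotents with bottom opens is bottom:
   P + Q is disjoint from its complement R, and P, Q, R, 0 is a context. *)
Lemma idem_openD_bot (A : pzRingType) (P Q : A) : idem P -> idem Q -> orth P Q ->
  fle (idem_open P) (fbot _) -> fle (idem_open Q) (fbot _) -> fle (idem_open (P + Q)) (fbot _).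
Proof.
move=> PP QQ PQ P_bot Q_bot.
have [RR PQ_R] := idem_compl (idemD PP QQ PQ).
have PQ_R_disj := orth_disjoint (idemD PP QQ PQ) RR PQ_R.
rewrite opprD addrA in PQ_R_disj.
apply: disjoint_from_cover (cover4 (complement_pou PP QQ PQ)) _ => z [-> | [-> | [-> | ->]]].
- exact: fle_trans (fmeet_r _ _) P_bot.
- exact: fle_trans (fmeet_r _ _) Q_bot.
- by rewrite PQ_R_disj; apply: fle_refl.
- exact: fle_trans (fmeet_r _ _) (idem_open0 A).
Qed.

Lemma idem_open_sum_bot (A : pzRingType) (I : eqType) (E : I -> A) (s : seq I) :
  uniq s -> (forall i, idem (E i)) -> (forall i j, i != j -> E i * E j = 0) ->
  (forall i, fle (idem_open (E i)) (fbot _)) ->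
  idem (\sum_(i <- s) E i) /\ fle (idem_open (\sum_(i <- s) E i)) (fbot _).
Proof.
move=> + EE orthE E_bot; elim: s => [|x s IH] /=.
  by rewrite big_nil; split; [apply: idem0 | apply: idem_open0].
case/andP=> x_notin /IH[sum_idem sum_bot]; rewrite big_cons.
have x_sum : orth (E x) (\sum_(i <- s) E i).
  split; [rewrite mulr_sumr | rewrite mulr_suml]; rewrite big1_seq // => i /andP[_ i_in];
    apply: orthE; apply: contraNneq x_notin; [move=> -> | move=> <-] => //.
by split; [apply: idemD | apply: idem_openD_bot].
Qed.

(* The unit alone is a partition of unity, so [1] is the top. *)
Lemma idem_open1_bot (A : pzRingType) : fle (idem_open (1 : A)) (fbot _) ->
  locale_trivial (Fobj F A).
Proof.
have one_pou : partition_of_unity (fun _ : 'I_1 => 1 : A).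
  by split=> [i | i j | ]; [rewrite mulr1 | rewrite !ord1 eqxx | rewrite big_ord1].
move=> one_bot; apply: fle_bot_eq.
by apply: fle_trans (pou_cover one_pou) _; apply/fjoin_lub => z [_ ->].
Qed.

Lemma ks_unit_bot n (f : 'I_3 -> 'I_n) : injective f ->
  fle (idem_open (delta_mx (f 0) (f 0) : 'M[Cplx]_n)) (fbot _).
Proof.
move=> f_inj; pose atom i := idem_open (embed f (proj (ks_vec i))).
have atom_idem i : idem (embed f (proj (ks_vec i))).
  by apply/idem_embed/proj_idem/ks_vec_pos.
case/and3P: ks_valid => /allP contexts_ok _ refuted.
have context_cover c : c \in ks_contexts -> fle (ftop _) (fjoin (fun z =>
    z = atom c.1.1 \/ z = atom c.1.2 \/ z = atom c.2 \/ z = idem_open (outside f))).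
  move=> /contexts_ok /and4P[/eqP uv /eqP uw /eqP vw res].
  by apply/cover4/embedded_context_pou => //; apply: ks_vec_pos.
have atoms_disjoint i j : ks_orthb i j -> fle (fmeet (atom i) (atom j)) (fbot _).
  move=> /eqP ij; rewrite /atom orth_disjoint //; first exact: fle_refl.
  exact: orth_embed_proj.
have rest_disjoint i : fle (fmeet (atom i) (idem_open (outside f))) (fbot _).
  rewrite /atom orth_disjoint //; first exact: fle_refl.
  - exact: idem_outside.
  - exact: orth_outside.
have := refutes_sound context_cover atoms_disjoint rest_disjoint (S := [:: 0%N]) _ refuted.
by rewrite /meet_of /= fmeet_top /atom -embed_delta // -proj_e1; apply.
Qed.

(* For n >= 3 every matrix unit E_mm of M_n(C) has bottom open (map e_1 to m),
   and the E_mm are orthogonal idempotents summing to 1. *)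
Lemma matrix_unit_bot n (m : 'I_n) : (3 <= n)%N ->
  fle (idem_open (delta_mx m m : 'M[Cplx]_n)) (fbot _).
Proof.
move=> n_ge3; pose f (x : 'I_3) := tperm (widen_ord n_ge3 0) m (widen_ord n_ge3 x).
have f_inj : injective f by move=> x y /perm_inj /(congr1 val) /= xy; apply: val_inj.
by have := ks_unit_bot f_inj; rewrite /f tpermL.
Qed.

Lemma matrix_ring_trivial n : (3 <= n)%N -> locale_trivial (Fobj F 'M[Cplx]_n).
Proof.
move=> n_ge3.
have unit_idem (i : 'I_n) : idem (delta_mx i i : 'M[Cplx]_n).
  by rewrite /idem -mulmxE mul_delta_mx.
have unit_orth (i j : 'I_n) : i != j -> delta_mx i i * delta_mx j j = 0 :> 'M[Cplx]_n.
  by move=> ij; rewrite -mulmxE mul_delta_mx_cond (negbTE ij) mulr0n.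
have units_bot (m : 'I_n) := matrix_unit_bot m n_ge3.
have [_] := idem_open_sum_bot (enum_uniq 'I_n) unit_idem unit_orth units_bot.
by rewrite big_enum /= -mx1_sum_delta; apply: idem_open1_bot.
Qed.

End PierceRestriction.

Theorem mainTheorem11 (F : RingLocFunctor) (HF : restricts_to_pierce F) :
  (forall R : pzRingType, kochen_specker R -> locale_trivial (Fobj F R)) /\
  (forall n : nat, (3 <= n)%nat -> locale_trivial (Fobj F 'M[Cplx]_n)).
Proof.
case: HF => alpha [alpha_ideal alpha_inj alpha_surj [alpha_top alpha_meet alpha_join] alpha_nat].
have matrix_trivial n : (3 <= n)%N -> locale_trivial (Fobj F 'M[Cplx]_n).
  exact: (matrix_ring_trivial alpha_ideal alpha_inj alpha_surj alpha_top alpha_meet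
    alpha_join alpha_nat).
split=> // R [n [n_ge3 [g]]].
rewrite /locale_trivial -(frame_hom_top (Fmap_hom F g)) (matrix_trivial n n_ge3).
exact: frame_hom_bot (Fmap_hom F g).
Qed.
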